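(* For every integer $k\ge1$, the vector $(1,3,k,1)$ is not realizable.
   Context: All graphs are finite, nonempty, and reflexive (every vertex has a loop). $N[v]$ is the closed neighborhood of $v$ (including $v$). For distinct $v,w$, $w$ strictly corners $v$ if $N[v]\subsetneq N[w]$; $v$ is then a strict corner. Corner ranking: set $G^{(1)}=G$, $k=1$. If $G^{(k)}$ is a clique, give all its vertices rank $k$ and stop. Else if $G^{(k)}$ has no strict corners, give all its vertices rank $\infty$ and stop. Else give every strict corner of $G^{(k)}$ rank $k$, delete them to get $G^{(k+1)}$ (induced subgraph), increase $k$ and repeat. The corner rank is the largest rank of a vertex; $X_k$ is the set of rank-$k$ vertices; cop-win graphs are exactly those of finite corner rank. The rank cardinality vector of a graph of corner rank $\alpha$ is $(x_\alpha,\dots,x_1)$ with $x_k=|X_k|$; a vector (finite list of positive integers) is realizable if it is the rank cardinality vector of some cop-win graph. *)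

From mathcomp Require Import all_boot.
Set Implicit Arguments. Unset Strict Implicit. Unset Printing Implicit Defensive.

(* A graph is a finite type T with an edge relation e : rel T that is
   reflexive (every vertex has a loop) and symmetric.  Induced subgraphs are
   given by vertex sets S : {set T}. *)
Section CornerRanking.
Variables (T : finType) (e : rel T).

Definition nbhd (S : {set T}) (v : T) : {set T} := [set w in S | e v w].

Definition strict_corner (S : {set T}) (v : T) : bool :=
  (v \in S) && [exists w in S, (w != v) && (nbhd S v \proper nbhd S w)].

Definition corners (S : {set T}) : {set T} := [set v | strict_corner S v].

Definition is_clique (S : {set T}) : bool :=
  [forall u in S, forall v in S, e u v].

(* G^(k) for k >= 1 : G^(1) = G, G^(k+1) = G^(k) minus its strict corners *)
Definition stage (k : nat) : {set T} :=
  iter k.-1 (fun S => S :\: corners S) setT.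

Definition corner_rank_is (a : nat) : Prop :=
  [/\ 1 <= a, is_clique (stage a) &
      forall k, 1 <= k < a -> ~~ is_clique (stage k) /\ corners (stage k) != set0].

Definition rank_set (a k : nat) : {set T} :=
  if k == a then stage k else corners (stage k).

Definition rank_card_vector (a : nat) : seq nat :=
  [seq #|rank_set a k| | k <- rev (iota 1 a)].

End CornerRanking.

Definition realizable (s : seq nat) : Prop :=
  exists (T : finType) (e : rel T),
    [/\ reflexive e, symmetric e, 0 < #|T| &
        exists a, corner_rank_is e a /\ s = rank_card_vector e a].

From mathcomp Require Import all_boot.
Set Implicit Arguments. Unset Strict Implicit. Unset Printing Implicit Defensive.

(* Let x be the corner of G, Y the corners of G^(2) = G - x, C the three
   corners of G^(3) and u the vertex of G^(4).
   Every strict corner is strictly cornered by a non-corner of the same stage,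
   so u corners each c in C inside G^(3).  Hence c has a non-neighbour in C,
   and, as c is not a corner of G^(2), a neighbour in Y missed by u.  Every
   y in Y is adjacent to x (else y would be a corner of G), so the vertex
   cornering x sees all of Y, and then so does some a in G^(3); a = u is
   impossible, so a is in C.  For b in C, the non-corner of G^(2) cornering a
   neighbour of b in Y missed by u lies in C and sees a, b and itself; since
   |C| = 3, a sees b.  So a has no non-neighbour in C, a contradiction. *)

Section Corners.
Variables (T : finType) (e : rel T).

Lemma cornerP (S : {set T}) v :
  reflect (v \in S /\ exists2 w, w \in S & nbhd e S v \proper nbhd e S w)
          (v \in corners e S).
Proof.
rewrite inE /strict_corner; apply: (iffP andP) => -[vS dom]; split=> //.
  by case/existsP: dom => w /and3P[wS _ vw]; exists w.
case: dom => w wS vw; apply/existsP; exists w; rewrite wS vw andbT /=.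
by apply: contraTneq vw => ->; rewrite proper_irrefl.
Qed.

Lemma corners_sub (S : {set T}) : corners e S \subset S.
Proof. by apply/subsetP=> v /cornerP[]. Qed.

Lemma dominated_adj (S : {set T}) v w t :
  nbhd e S v \subset nbhd e S w -> t \in S -> e v t -> e w t.
Proof.
by move=> /subsetP vw tS evt; have := vw t; rewrite !inE tS evt => /(_ isT).
Qed.

Lemma dominated_by_noncorner (S : {set T}) v : v \in corners e S ->
  exists2 w, w \in S :\: corners e S & nbhd e S v \proper nbhd e S w.
Proof.
case/cornerP=> _ [w0 w0S vw0].
pose P w := (w \in S) && (nbhd e S v \proper nbhd e S w).
have P_w0 : P w0 by rewrite /P w0S vw0.
(* A dominator of v with a largest neighbourhood cannot itself be a corner. *)
case: (arg_maxnP (fun w => #|nbhd e S w|) P_w0) => w /andP[wS vw] wmax.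
exists w => //; rewrite inE wS andbT; apply/negP => /cornerP[_ [w' w'S ww']].
have := wmax w'; rewrite /P w'S (proper_trans vw ww') => /(_ isT).
by apply/negP; rewrite -ltnNge proper_card.
Qed.

Lemma nbhd_proper_widen (S S' : {set T}) v w :
  nbhd e S v \proper nbhd e S w -> nbhd e S' v :\: S \subset nbhd e S' w ->
  S \subset S' -> nbhd e S' v \proper nbhd e S' w.
Proof.
move=> /properP[/subsetP vw [t tw tv]] /subsetP out /subsetP sSS'.
apply/properP; split.
  apply/subsetP=> s svs; have [sS | sS] := boolP (s \in S).
    by move: svs (vw s); rewrite !inE sS (sSS' s sS) /= => ->; apply.
  by rewrite out // inE sS.
move: tw tv; rewrite !inE => /andP[tS ewt]; rewrite tS /= => evt.
by exists t; rewrite !inE (sSS' t tS) ?ewt ?evt.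
Qed.

Lemma corner_widen (S S' : {set T}) v : v \in corners e S ->
  nbhd e S' v \subset S -> S \subset S' -> v \in corners e S'.
Proof.
case/cornerP=> vS [w wS vw] inS sSS'; apply/cornerP.
split; first exact: subsetP sSS' v vS.
exists w; first exact: subsetP sSS' w wS.
apply: nbhd_proper_widen vw _ sSS'.
by move: inS; rewrite -setD_eq0 => /eqP->; rewrite sub0set.
Qed.

End Corners.

Section FourStages.
Variables (T : finType) (e : rel T).
Hypotheses (e_refl : reflexive e) (e_sym : symmetric e).
Variables (x u : T) (S H : {set T}).
Local Notation Y := (corners e S).
Local Notation C := (corners e H).

Hypothesis S_def : S = [set: T] :\: corners e [set: T].
Hypothesis H_def : H = S :\: Y.
Hypothesis X1 : corners e [set: T] = [set x].
Hypothesis X3 : #|C| = 3.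
Hypothesis X4 : H :\: C = [set u].

Let memS t : (t \in S) = (t != x).
Proof. by rewrite S_def in_setD X1 in_set1 in_setT andbT. Qed.

Let HS : H \subset S. Proof. by rewrite H_def subsetDl. Qed.
Let YS : Y \subset S. Proof. exact: corners_sub. Qed.
Let CH : C \subset H. Proof. exact: corners_sub. Qed.
Let CS : C \subset S. Proof. exact: subset_trans CH HS. Qed.

Let memH t : (t \in H) = (t \notin Y) && (t \in S).
Proof. by rewrite H_def in_setD. Qed.

Let uH : u \in H.
Proof. by have := set11 u; rewrite -X4 inE => /andP[]. Qed.

Let noncorner_H t : t \in H -> t \notin C -> t = u.
Proof. by move=> tH tNC; apply/set1P; rewrite -X4 inE tNC tH. Qed.

Lemma C_dominated_by_u c : c \in C -> nbhd e H c \proper nbhd e H u.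
Proof. by case/dominated_by_noncorner=> w; rewrite X4 => /set1P->. Qed.

Lemma C_adj_u c : c \in C -> e c u.
Proof.
move=> cC; rewrite e_sym.
exact: dominated_adj (proper_sub (C_dominated_by_u cC)) (subsetP CH c cC) (e_refl c).
Qed.

Lemma C_nonneighbour c : c \in C -> exists2 t, t \in C & ~~ e c t.
Proof.
move=> cC; have [_ [t]] := properP (C_dominated_by_u cC).
rewrite !inE => /andP[tH _]; rewrite tH /= => nect.
exists t => //; apply: contraNT nect => /(noncorner_H tH) ->; exact: C_adj_u.
Qed.

Lemma C_private_neighbour c : c \in C -> exists2 y, y \in Y & e c y && ~~ e u y.
Proof.
move=> cC; have cH : c \in H := subsetP CH c cC.
apply/exists_inP; apply: contraT => /exists_inPn noY.
have cY : c \in Y.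
  apply/cornerP; split; first exact: subsetP HS c cH.
  exists u; first exact: subsetP HS u uH.
  apply: nbhd_proper_widen (C_dominated_by_u cC) _ HS.
  apply/subsetP=> s; rewrite !inE memH negb_and negbK.
  case/andP=> [/orP[sY | /negbTE->//] /andP[sS ecs]].
  by move: (noY s sY); rewrite sS ecs negbK.
by move: cH; rewrite memH cY.
Qed.

Lemma Y_adj_x y : y \in Y -> e y x.
Proof.
move=> yY; apply: contraT => neyx; have /cornerP[yS _] := yY.
have : y \in corners e [set: T].
  apply: corner_widen yY _ (subsetT S); apply/subsetP=> s.
  by rewrite !inE memS => /andP[_ eys]; apply: contraNneq neyx => <-.
by rewrite X1 => /set1P yx; move: yS; rewrite memS yx eqxx.
Qed.

Lemma H_adj_Y : exists2 a, a \in H & {in Y, forall y, e a y}.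
Proof.
have /cornerP[_ [z _ xz]] : x \in corners e [set: T] by rewrite X1 set11.
have z_adj_Y y : y \in Y -> e z y.
  by move=> yY; apply: dominated_adj (proper_sub xz) _ _; rewrite ?inE // e_sym Y_adj_x.
have [zY | zNY] := boolP (z \in Y); last first.
  exists z => //; rewrite memH zNY memS; apply: contraTneq xz => ->; exact: proper_irrefl.
have [h] := dominated_by_noncorner zY; rewrite -H_def => hH zh.
exists h => // y yY.
exact: dominated_adj (proper_sub zh) (subsetP YS y yY) (z_adj_Y y yY).
Qed.

Lemma C_adj_Y : exists2 a, a \in C & {in Y, forall y, e a y}.
Proof.
have [a aH aY] := H_adj_Y; exists a => //; apply: contraT => /(noncorner_H aH) au.
have [c cC] : exists c, c \in C by apply/set0Pn; rewrite -card_gt0 X3.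
have [y yY /andP[_]] := C_private_neighbour cC.
by rewrite -au aY.
Qed.

Lemma C_adj_C a : a \in C -> {in Y, forall y, e a y} -> {in C, forall b, e a b}.
Proof.
move=> aC aY b bC; have [-> | ba] := eqVneq b a; first exact: e_refl.
have [y yY /andP[eby neuy]] := C_private_neighbour bC.
have [h] := dominated_by_noncorner yY; rewrite -H_def => hH yh.
have yS := subsetP YS y yY.
have ehy : e h y := dominated_adj (proper_sub yh) yS (e_refl y).
have eha : e h a.
  by apply: dominated_adj (proper_sub yh) (subsetP CS a aC) _; rewrite e_sym aY.
have ehb : e h b.
  by apply: dominated_adj (proper_sub yh) (subsetP CS b bC) _; rewrite e_sym.
have hC : h \in C by apply: contraT => /(noncorner_H hH) hu; rewrite -hu ehy in neuy.
have [ha | ha] := eqVneq h a; first by rewrite -ha.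
have [hb | hb] := eqVneq h b; first by rewrite -hb e_sym.
have [t tC neht] := C_nonneighbour hC.
(* h sees a, b and itself, and these are all of C. *)
have /eqP defC : [set a; b; h] == C.
  rewrite eqEcard X3 setUC cardsU1 cards2 !inE negb_or ha hb [a == b]eq_sym ba.
  apply/andP; split=> //; apply/subsetP=> s /setU1P[-> // | /set2P[]-> //].
move: tC neht; rewrite -defC => /setUP[/set2P[]|/set1P] ->.
all: by rewrite ?eha ?ehb ?e_refl.
Qed.

Lemma stage_counts_1_3_1_absurd : False.
Proof.
have [a aC aY] := C_adj_Y.
have [t tC neat] := C_nonneighbour aC.
by rewrite (C_adj_C aC aY tC) in neat.
Qed.

End FourStages.

Theorem corollary3p25 (k : nat) : 1 <= k -> ~ realizable [:: 1; 3; k; 1].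
Proof.
move=> _ [T [e [e_refl e_sym _ [a [_ vec]]]]].
have a4 : a = 4 by have := congr1 size vec; rewrite size_map size_rev size_iota.
move: vec; rewrite a4 /rank_card_vector /rank_set /=.
case=> /esym/eqP/cards1P[u X4] /esym X3 _ /esym/eqP/cards1P[x X1].
exact: (@stage_counts_1_3_1_absurd _ _ e_refl e_sym x u (stage e 2) (stage e 3)
          erefl erefl X1 X3 X4).
Qed.
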